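(* There is a uniform constant $L>0$ such that for all $m,n\in\mathbb N$ the diagonal operator \[D(m,n):\mathbb C^{\mathcal M(m,n),s}\to\mathbb C^{\mathcal J(m,n)},\qquad (a_{\mathbf i})_{\mathbf i\in\mathcal M(m,n)}\mapsto\big(\operatorname{card}[\mathbf j]^{\frac{m+1}{2m}}a_{\mathbf j}\big)_{\mathbf j\in\mathcal J(m,n)}\] satisfies \[\big\|D(m,n):\ell^s_{\frac{2m}{m+1},1}(\mathcal M(m,n))\to\ell_{\frac{2m}{m+1},1}(\mathcal J(m,n))\big\|\le L\,m.\]
   Context: $\mathcal M(m,n)=\{(i_1,\dots,i_m):1\le i_k\le n\}$, $\mathcal J(m,n)=\{\mathbf j\in\mathcal M(m,n):j_1\le\dots\le j_m\}$. For $\mathbf i\in\mathcal M(m,n)$, $[\mathbf i]$ is the set of all $\mathbf j$ obtained from $\mathbf i$ by permuting its coordinates. $\mathbb C^{\mathcal M(m,n),s}$ is the space of symmetric matrices, i.e. $a_{\mathbf i}=a_{\mathbf j}$ whenever $\mathbf j\in[\mathbf i]$. For finite $I$ and $1<p<\infty$, $\|x\|_{\ell_{p,1}(I)}=\sum_kx_k^*(k^{1/p}-(k-1)^{1/p})$, $x^*$ the non-increasing rearrangement of $(|x_i|)$; $\ell^s_{p,1}(\mathcal M(m,n))$ denotes $\mathbb C^{\mathcal M(m,n),s}$ with the norm of $\ell_{p,1}(\mathcal M(m,n))$. *)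

From mathcomp Require Import all_boot all_order all_algebra.
From mathcomp Require Import all_classical all_reals all_analysis.
From mathcomp Require Export complex.
Set Implicit Arguments. Unset Strict Implicit. Unset Printing Implicit Defensive.
Import Order.TTheory GRing.Theory Num.Theory.
Local Open Scope ring_scope.

(* M(m,n): multi-indices (i_1,...,i_m) with entries in {1..n}, here 'I_n = {0..n-1} *)
Definition Mind (m n : nat) : finType := m.-tuple 'I_n.

Definition in_J (m n : nat) (j : Mind m n) : bool := sorted leq (map val (val j)).

Definition eqclass (m n : nat) (i : Mind m n) : {set Mind m n} :=
  [set j : Mind m n | perm_eq (val j) (val i)].

Definition symmetric_mat (R : realType) (m n : nat) (a : Mind m n -> R[i]) : Prop :=
  forall i j : Mind m n, j \in eqclass i -> a i = a j.

Definition cmod (R : realType) (z : R[i]) : R := complex.Re `|z|.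

Definition decr_rearr (R : realType) (s : seq R) : seq R := sort (fun x y => y <= x) s.

Definition lorentz_p1 (R : realType) (p : R) (s : seq R) : R :=
  let xs := decr_rearr s in
  \sum_(k < size xs) nth 0 xs k * (k.+1%:R `^ p^-1 - k%:R `^ p^-1).

Definition normM (R : realType) (p : R) (m n : nat) (a : Mind m n -> R[i]) : R :=
  lorentz_p1 p [seq cmod (a i) | i <- enum (Mind m n)].

Definition normDJ (R : realType) (p : R) (m n : nat) (a : Mind m n -> R[i]) : R :=
  lorentz_p1 p [seq (#|eqclass j|%:R `^ ((m.+1)%:R / (2 * m)%:R)) * cmod (a j)
               | j <- enum (Mind m n) & in_J j].

From mathcomp Require Import all_boot all_order all_algebra all_fingroup.
From mathcomp Require Import all_classical all_reals all_analysis.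
From mathcomp Require Import complex.
From mathcomp Require Import ring lra zify.
Import Order.TTheory GRing.Theory Num.Theory.
Local Open Scope ring_scope.

(* With q = (m+1)/(2m), the l_{2m/(m+1),1} norm pairs the decreasing
   rearrangement with the nonincreasing weights (k+1)^q - k^q.  For symmetric a,
   cutting |a| at its least nonzero value t splits both sides additively (the two
   parts are comonotone) and lowers the number of nonzero values, so by induction
   it suffices to bound t times the indicator of a symmetric set with C elements,
   whose norm on M(m,n) is t C^q.  Group the j in J by the dyadic size
   2^s <= card[j] < 2^(s+1); there are fewer than m^2 groups, and group s
   contributes at most (2 M_s)^q <= 2 M_s^q, where M_s counts the elements of the
   set lying in its classes.  Since q >= 1/2, sum_s M_s^q <= m (sum_s M_s)^q = m C^q. *)

Section WeightedSum.
Context {R : realType}.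
Implicit Types (W : nat -> R) (s : seq R).

Fixpoint wsum W s : R :=
  if s is x :: s' then x * W 0%N + wsum (fun k => W k.+1) s' else 0.

Lemma wsumE W s : wsum W s = \sum_(k < size s) s`_k * W k.
Proof.
elim: s W => [|x s IH] W /=; first by rewrite big_ord0.
by rewrite big_ord_recl IH.
Qed.

Lemma wsum_cat W s1 s2 :
  wsum W (s1 ++ s2) = wsum W s1 + wsum (fun k => W (size s1 + k)%N) s2.
Proof.
elim: s1 W => [|x s1 IH] W /=; first by rewrite add0r.
by rewrite IH addrA.
Qed.

Lemma wsum_eq0 W s : all (eq_op^~ 0) s -> wsum W s = 0.
Proof.
elim: s W => [|x s IH] W //= /andP[/eqP -> /IH ->].
by rewrite mul0r addr0.
Qed.

Lemma wsum_ge0 W s :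
  (forall k, 0 <= W k) -> all (>= 0) s -> 0 <= wsum W s.
Proof.
elim: s W => [|x s IH] W //= W_ge0 /andP[x_ge0 s_ge0].
by rewrite addr_ge0 ?mulr_ge0 ?IH.
Qed.

Section MapLemmas.
Variables (X : Type) (e : seq X).

Lemma wsum_mapD W (f g : X -> R) :
  wsum W [seq f x + g x | x <- e] = wsum W (map f e) + wsum W (map g e).
Proof.
elim: e W => [|x e' IH] W /=; first by rewrite addr0.
by rewrite IH mulrDl addrACA.
Qed.

Lemma wsum_mapZ W (t : R) (f : X -> R) :
  wsum W [seq t * f x | x <- e] = t * wsum W (map f e).
Proof.
elim: e W => [|x e' IH] W /=; first by rewrite mulr0.
by rewrite IH mulrDr mulrA.
Qed.

Lemma ler_wsum_map W (f g : X -> R) :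
  (forall k, 0 <= W k) -> (forall x, f x <= g x) ->
  wsum W (map f e) <= wsum W (map g e).
Proof.
move=> W_ge0 le_fg; elim: e W W_ge0 => [|x e' IH] W W_ge0 //=.
by rewrite lerD ?ler_wpM2r ?IH.
Qed.

End MapLemmas.

Lemma weight_le_head {W} : (forall k, W k.+1 <= W k) -> forall k, W k <= W 0%N.
Proof. by move=> W_noninc; elim=> // k IH; apply: le_trans IH. Qed.

Lemma wsum_swap {W x y} s1 s2 : (forall k, W k.+1 <= W k) -> x <= y ->
  wsum W (x :: s1 ++ y :: s2) <= wsum W (y :: s1 ++ x :: s2).
Proof.
move=> W_noninc le_xy; rewrite /= !wsum_cat /=.
have : 0 <= (y - x) * (W 0%N - W (size s1 + 0).+1).
  by rewrite mulr_ge0 ?subr_ge0 ?weight_le_head.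
lra.
Qed.

Lemma wsum_le_sorted W s t : (forall k, W k.+1 <= W k) ->
  perm_eq s t -> sorted >=%R t -> wsum W s <= wsum W t.
Proof.
have [n] := ubnP (size s); elim: n W s t => // n IH W [|x s] [|y t] //= sz_s W_noninc;
  try by move/perm_size.
move=> pst sorted_t.
have y_max : all (<= y) (x :: s).
  by rewrite (perm_all _ pst) /= lexx (order_path_min ge_trans sorted_t).
have le_xy : x <= y by have /andP[] := y_max.
have W_noninc1 : forall k, W k.+2 <= W k.+1 by move=> k; apply: W_noninc.
have [eq_xy|neq_xy] := eqVneq x y.
  rewrite eq_xy lerD2l; apply: IH => //; last exact: path_sorted sorted_t.
  by rewrite -(perm_cons y) -{1}eq_xy.
have y_in_s : y \in s.
  by have := perm_mem pst y; rewrite !inE eqxx eq_sym (negbTE neq_xy) /= => ->.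
case/splitPr: y_in_s sz_s pst => s1 s2 sz_s pst.
apply: le_trans (wsum_swap s1 s2 W_noninc le_xy) _.
rewrite /= lerD2l; apply: IH => //; last exact: path_sorted sorted_t.
- by move: sz_s; rewrite !size_cat /=; lia.
- rewrite -(perm_cons y); apply: perm_trans pst.
  by apply/seq.permP => a; rewrite /= !count_cat /=; lia.
Qed.

Lemma wsum_sorted01 W s : sorted >=%R s -> all (fun v => (v == 0) || (v == 1)) s ->
  wsum W s = \sum_(k < count (pred1 1) s) W k.
Proof.
elim: s W => [|v s IH] W /=; first by rewrite big_ord0.
move=> sorted_vs /andP[v01 s01].
have s_le_v : all (<= v) s := order_path_min ge_trans sorted_vs.
case/orP: v01 => /eqP v_eq; rewrite v_eq in s_le_v *; last first.
  by rewrite mul1r IH ?(path_sorted sorted_vs) // eqxx big_ord_recl.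
have s0 : all (eq_op^~ 0) s.
  apply/allP => u u_s; have := allP s_le_v u u_s.
  by case/orP: (allP s01 u u_s) => /eqP-> //=; rewrite ler10.
rewrite mul0r add0r wsum_eq0 // eq_sym oner_eq0 /=.
rewrite (eq_in_count (a2 := pred0)) ?count_pred0 ?big_ord0 // => u u_s.
by rewrite (eqP (allP s0 u u_s)) /= eq_sym oner_eq0.
Qed.

End WeightedSum.

Definition lorentz {R : realType} (W : nat -> R) {X : Type} (r : seq X) (f : X -> R) : R :=
  wsum W (sort >=%R (map f r)).

Lemma max_sub_add_min {R : realDomainType} (x t : R) : Num.max (x - t) 0 + Num.min x t = x.
Proof. by rewrite /Num.max /Num.min; case: ifP; case: ifP; lra. Qed.

Lemma min_layer {R : realDomainType} {t x : R} :
  0 <= t -> 0 <= x -> (0 < x -> t <= x) -> Num.min x t = t * (0 < x)%R%:R.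
Proof.
move=> t_ge0; rewrite le_eqVlt => /predU1P[<- _|x_gt0 /(_ x_gt0) le_tx].
  by rewrite ltxx mulr0 min_l.
by rewrite x_gt0 mulr1 min_r.
Qed.

Section Lorentz.
Context {R : realType} {W : nat -> R}.

Lemma lorentz_homo {X : Type} (r : seq X) (f : X -> R) (phi : R -> R) :
  {homo phi : x y / x <= y} ->
  lorentz W r (fun x => phi (f x)) =
    wsum W [seq phi (f x) | x <- sort (relpre f >=%R) r].
Proof.
move=> phi_homo; rewrite [in RHS](map_comp phi f) -sort_map /lorentz; congr wsum.
apply: (sorted_eq ge_trans ge_anti).
- exact: sort_sorted ge_total _.
- by apply: homo_sorted (sort_sorted ge_total _) => x y; apply: phi_homo.
- by rewrite perm_sort map_comp perm_map // perm_sym perm_sort.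
Qed.

Lemma lorentzE {X : Type} (r : seq X) (f : X -> R) :
  lorentz W r f = wsum W (map f (sort (relpre f >=%R) r)).
Proof. exact: (@lorentz_homo _ r f id). Qed.

Lemma eq_in_lorentz {X : eqType} (r : seq X) (f g : X -> R) :
  {in r, f =1 g} -> lorentz W r f = lorentz W r g.
Proof. by move=> /eq_in_map eq_fg; rewrite /lorentz eq_fg. Qed.

Lemma lorentzZ {X : eqType} (r : seq X) (t : R) (f : X -> R) : 0 <= t ->
  lorentz W r (fun x => t * f x) = t * lorentz W r f.
Proof.
move=> t_ge0; rewrite (@lorentz_homo _ r f ( *%R t)) ?wsum_mapZ -?lorentzE //.
by move=> x y; apply: ler_wpM2l.
Qed.

Lemma lorentz0 {X : eqType} (r : seq X) : lorentz W r (fun _ => 0) = 0.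
Proof. by rewrite lorentzE wsum_eq0 // all_map; apply/allP => x _ /=. Qed.

Lemma lorentz_ge0 {X : eqType} (r : seq X) (f : X -> R) :
  (forall k, 0 <= W k) -> (forall x, 0 <= f x) -> 0 <= lorentz W r f.
Proof.
by move=> W_ge0 f_ge0; rewrite lorentzE wsum_ge0 // all_map; apply/allP => x _ /=.
Qed.

Lemma lorentz_indicator {X : eqType} (r : seq X) (P : pred X) :
  lorentz W r (fun x => (P x)%:R) = \sum_(k < count P r) W k.
Proof.
rewrite /lorentz wsum_sorted01 ?sort_sorted //; last 2 first.
- exact: ge_total.
- by rewrite all_sort all_map; apply/allP => x _ /=; case: (P x); rewrite eqxx ?orbT.
rewrite (seq.permP (permEl (perm_sort _ _))) count_map (eq_count (a2 := P)) // => x /=.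
by case: (P x); rewrite /= ?eqxx // eq_sym oner_eq0.
Qed.

Lemma lorentz_comonotoneD {X : Type} (r : seq X) (f : X -> R) (phi psi : R -> R) :
  {homo phi : x y / x <= y} -> {homo psi : x y / x <= y} ->
  (forall x, phi x + psi x = x) ->
  lorentz W r f = lorentz W r (fun x => phi (f x)) + lorentz W r (fun x => psi (f x)).
Proof.
move=> phi_homo psi_homo phi_psi.
rewrite lorentz_homo // lorentz_homo // lorentzE -wsum_mapD.
by congr wsum; apply: eq_map => x; rewrite phi_psi.
Qed.

Lemma lorentz_layer {X : eqType} (r : seq X) (g : X -> R) (t : R) :
  0 <= t -> (forall x, 0 <= g x) -> (forall x, 0 < g x -> t <= g x) ->
  lorentz W r g = lorentz W r (fun x => Num.max (g x - t) 0)
                  + t * \sum_(k < count (fun x => 0 < g x) r) W k.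
Proof.
move=> t_ge0 g_ge0 g_ge_t.
rewrite (lorentz_comonotoneD r g (fun x => Num.max (x - t) 0) (fun x => Num.min x t)).
- congr (_ + _); rewrite -lorentz_indicator -lorentzZ //.
  by apply: eq_in_lorentz => x _; rewrite (min_layer t_ge0 (g_ge0 x) (g_ge_t x)).
- by move=> x y le_xy; rewrite le_max2 ?lerB.
- by move=> x y le_xy; rewrite le_min2.
- by move=> x; rewrite max_sub_add_min.
Qed.

Hypothesis W_noninc : forall k, W k.+1 <= W k.

Lemma wsum_le_lorentz {X : eqType} {r e : seq X} {f : X -> R} :
  perm_eq e r -> wsum W (map f e) <= lorentz W r f.
Proof.
move=> per; apply: wsum_le_sorted => //; last exact: sort_sorted ge_total _.
by rewrite perm_sym perm_sort perm_sym perm_map.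
Qed.

Lemma lorentzD_le {X : eqType} {r : seq X} {f g : X -> R} :
  lorentz W r (fun x => f x + g x) <= lorentz W r f + lorentz W r g.
Proof. by rewrite lorentzE wsum_mapD lerD ?wsum_le_lorentz ?perm_sort. Qed.

Lemma lorentz_sum_le {I : Type} {S : seq I} {X : eqType} {r : seq X} {h : I -> X -> R} :
  lorentz W r (fun x => \sum_(s <- S) h s x) <= \sum_(s <- S) lorentz W r (h s).
Proof.
elim: S => [|s S IH].
  by rewrite big_nil (eq_in_lorentz r _ (fun _ => 0)) ?lorentz0 // => x _; rewrite big_nil.
rewrite big_cons (eq_in_lorentz r _ (fun x => h s x + \sum_(s <- S) h s x)).
  by apply: le_trans lorentzD_le _; rewrite lerD2l.
by move=> x _; rewrite big_cons.
Qed.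

Lemma ler_lorentz {X : eqType} {r : seq X} {f g : X -> R} :
  (forall k, 0 <= W k) -> (forall x, f x <= g x) -> lorentz W r f <= lorentz W r g.
Proof.
move=> W_ge0 le_fg; rewrite lorentzE.
apply: le_trans (@ler_wsum_map _ _ _ W f g W_ge0 le_fg) _.
by rewrite wsum_le_lorentz ?perm_sort.
Qed.

End Lorentz.

Section PowerWeights.
Context {R : realType}.
Implicit Types (q x a b : R).

Definition pweight q (k : nat) : R := k.+1%:R `^ q - k%:R `^ q.

Lemma lorentz_p1_map (X : Type) (p : R) (r : seq X) (f : X -> R) :
  lorentz_p1 p (map f r) = lorentz (pweight p^-1) r f.
Proof. by rewrite /lorentz_p1 /decr_rearr /lorentz wsumE. Qed.

Lemma pweight_ge0 q k : 0 <= q -> 0 <= pweight q k.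
Proof. by move=> q_ge0; rewrite subr_ge0 ge0_ler_powR ?nnegrE ?ler_nat. Qed.

Lemma sum_pweight q N : q != 0 -> \sum_(k < N) pweight q k = N%:R `^ q.
Proof.
move=> q_neq0; rewrite -(big_mkord xpredT) (telescope_sumr (fun k => k%:R `^ q)) //.
by rewrite powR0 // subr0.
Qed.

Lemma powR_le_affine x q : 0 <= x -> 0 < q -> q <= 1 -> x `^ q <= q * x + (1 - q).
Proof.
move=> x_ge0 q_gt0; rewrite le_eqVlt => /predU1P[->|q_lt1].
  by rewrite powRr1 // mul1r subrr addr0.
have q'_gt0 : 0 < 1 - q by rewrite subr_gt0.
have := @conjugate_powR R (x `^ q) 1 q^-1 (1 - q)^-1 (powR_ge0 _ _) ler01.
rewrite !invr_gt0 !invrK -powRrM mulfV ?gt_eqF // powRr1 // powR1 mulr1 mul1r (mulrC x).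
by apply; rewrite // addrC subrK.
Qed.

Lemma powR_midpoint_le a b q : 0 <= a -> 0 <= b -> 0 < q -> q <= 1 ->
  a `^ q + b `^ q <= 2 * ((a + b) / 2) `^ q.
Proof.
move=> a_ge0 b_ge0 q_gt0 q_le1; set c := (a + b) / 2.
have [c0|c_neq0] := eqVneq c 0.
  have [-> ->] : a = 0 /\ b = 0 by move: c0; rewrite /c; split; lra.
  by rewrite c0 powR0 ?gt_eqF // addr0 mulr0.
have c_gt0 : 0 < c by rewrite lt_neqAle eq_sym c_neq0 /c divr_ge0 ?addr_ge0.
have scale y : 0 <= y -> y `^ q <= c `^ q * (q * (y / c) + (1 - q)).
  move=> y_ge0; have yc_ge0 : 0 <= y / c := divr_ge0 y_ge0 (ltW c_gt0).
  rewrite -{1}(divfK c_neq0 y) mulrC powRM ?(ltW c_gt0) //.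
  by rewrite ler_wpM2l ?powR_ge0 ?powR_le_affine.
apply: le_trans (lerD (scale a a_ge0) (scale b b_ge0)) _.
have sum_ratios : q * (a / c) + q * (b / c) = 2 * q.
  have ab : a + b = c * 2 by rewrite /c divfK // pnatr_eq0.
  by rewrite -mulrDr -mulrDl ab mulrAC mulfV // mul1r mulrC.
rewrite -mulrDr mulrC ler_wpM2r ?powR_ge0 //; lra.
Qed.

Lemma pweight_noninc q k : 0 < q -> q <= 1 -> pweight q k.+1 <= pweight q k.
Proof.
move=> q_gt0 q_le1.
have := powR_midpoint_le k%:R k.+2%:R q (ler0n _ _) (ler0n _ _) q_gt0 q_le1.
have -> : (k%:R + k.+2%:R) / 2 = k.+1%:R :> R.
  by rewrite -[k.+2]addn2 -[k.+1]addn1 !natrD; field.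
rewrite /pweight; lra.
Qed.

Lemma sqrtr_le_avg (u t : R) : 0 <= u -> 0 < t -> Num.sqrt u <= (t * u + t^-1) / 2.
Proof.
move=> u_ge0 t_gt0; rewrite -(ler_pM2r (mulr_gt0 (ltr0n R 2) t_gt0)).
have -> : (t * u + t^-1) / 2 * (2 * t) = (t * Num.sqrt u) ^+ 2 + 1.
  by rewrite exprMn sqr_sqrtr //; field; rewrite gt_eqF.
have := sqr_ge0 (t * Num.sqrt u - 1); nra.
Qed.

Lemma sum_powR_le (m : nat) (x : nat -> R) q : (0 < m)%N -> 2^-1 <= q -> q <= 1 ->
  (forall s, 0 <= x s) ->
  \sum_(s < m * m) x s `^ q <= m%:R * (\sum_(s < m * m) x s) `^ q.
Proof.
move=> m_gt0 q_ge12 q_le1 x_ge0.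
have q_gt0 : 0 < q by apply: lt_le_trans q_ge12; rewrite invr_gt0.
have mR_gt0 : 0 < m%:R :> R by rewrite ltr0n.
set T := \sum_(s < m * m) x s.
have [T0|T_neq0] := eqVneq T 0.
  rewrite T0 powR0 ?gt_eqF // mulr0 big1 // => s _.
  by rewrite (psumr_eq0P (fun (i : 'I_(m * m)) _ => x_ge0 i) T0) // powR0 ?gt_eqF.
have T_gt0 : 0 < T by rewrite lt_neqAle eq_sym T_neq0 sumr_ge0.
(* with u = x / T <= 1: u^q <= sqrt u <= (m u + 1/m) / 2, and the u sum to 1 *)
have le_term (s : 'I_(m * m)) :
    x s `^ q <= T `^ q * ((m%:R * (x s / T) + m%:R^-1) / 2).
  have u_ge0 : 0 <= x s / T := divr_ge0 (x_ge0 s) (ltW T_gt0).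
  have u_le1 : x s / T <= 1.
    by rewrite ler_pdivrMr // mul1r /T (bigD1 s) //= lerDl sumr_ge0.
  rewrite -{1}(divfK T_neq0 (x s)) mulrC powRM ?(ltW T_gt0) // ler_wpM2l ?powR_ge0 //.
  apply: le_trans _ (sqrtr_le_avg _ _ u_ge0 mR_gt0); rewrite -powR12_sqrt //.
  have [->|u_neq0] := eqVneq (x s / T) 0; first by rewrite !powR0 ?gt_eqF.
  by rewrite ger_powR // lt_neqAle eq_sym u_neq0 u_ge0.
apply: le_trans (ler_sum _ (fun s _ => le_term s)) _.
rewrite -mulr_sumr mulrC ler_wpM2r ?powR_ge0 // -mulr_suml big_split /=.
rewrite -mulr_sumr -mulr_suml -/T mulfV // sumr_const card_ord.
have mR_neq0 : m%:R != 0 :> R by rewrite gt_eqF.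
by rewrite mulr1 -[m%:R^-1 *+ _]mulr_natr natrM mulrA mulVf // mul1r; lra.
Qed.

End PowerWeights.

Definition enumJ (m n : nat) : seq (Mind m n) := [seq j <- enum (Mind m n) | in_J j].

Section MultiIndices.
Context {m n : nat}.
Local Notation M := (Mind m n).
Local Notation enumJ := (enumJ m n).
Implicit Types i j : M.

Definition sorted_rep i : M := sort_tuple (relpre val leq) i.

Lemma in_eqclass i j : (j \in eqclass i) = perm_eq (val j) (val i).
Proof. by rewrite inE. Qed.

Lemma eqclass_sym i j : (j \in eqclass i) = (i \in eqclass j).
Proof. by rewrite !in_eqclass perm_sym. Qed.

Lemma eqclass_refl j : j \in eqclass j.
Proof. by rewrite in_eqclass. Qed.

Lemma sorted_rep_val i : map val (val (sorted_rep i)) = sort leq (map val (val i)).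
Proof. by rewrite sort_map. Qed.

Lemma sorted_rep_in i : sorted_rep i \in eqclass i.
Proof. by rewrite in_eqclass perm_sort. Qed.

Lemma sorted_rep_J i : in_J (sorted_rep i).
Proof. by rewrite /in_J sorted_rep_val sort_sorted //; exact: leq_total. Qed.

Lemma sorted_rep_enumJ i : sorted_rep i \in enumJ.
Proof. by rewrite mem_filter mem_enum sorted_rep_J. Qed.

Lemma sorted_rep_unique i j : in_J j -> i \in eqclass j -> sorted_rep i = j.
Proof.
move=> j_J i_j; apply/val_inj/(inj_map val_inj).
rewrite sorted_rep_val; apply: (sorted_eq leq_trans anti_leq) => //.
- exact: sort_sorted leq_total _.
- by rewrite perm_sort perm_map // -in_eqclass.
Qed.

Lemma card_eqclass_le j : (#|eqclass j| <= m ^ m)%N.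
Proof.
pose reindex (f : {ffun 'I_m -> 'I_m}) : M := [tuple tnth j (f k) | k < m].
have sub : eqclass j \subset reindex @: [set: {ffun 'I_m -> 'I_m}].
  apply/fintype.subsetP => i; rewrite in_eqclass => /tuple_permP[p i_p].
  apply/imsetP; exists (finfun p); rewrite ?inE //; apply/val_inj; rewrite i_p.
  by congr val; apply: eq_mktuple => k; rewrite ffunE.
apply: leq_trans (subset_leq_card sub) _; apply: leq_trans (leq_imset_card _ _) _.
by rewrite cardsT card_ffun !card_ord.
Qed.

Definition level j : nat := trunc_log 2 #|eqclass j|.

Lemma exp_level_le j : (2 ^ level j <= #|eqclass j|)%N.
Proof.
by apply: trunc_logP; rewrite // card_gt0; apply/set0Pn; exists j; exact: eqclass_refl.
Qed.

Lemma card_eqclass_lt_level j : (#|eqclass j| < 2 ^ (level j).+1)%N.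
Proof. exact: trunc_log_ltn. Qed.

Lemma level_lt j : (0 < m)%N -> (level j < m * m)%N.
Proof.
move=> m_gt0; rewrite -(ltn_exp2l _ _ (ltnSn 1)).
apply: leq_ltn_trans (exp_level_le j) _; apply: leq_ltn_trans (card_eqclass_le j) _.
by rewrite expnM ltn_exp2r // ltn_expl.
Qed.

Lemma count_class_invariant (P : pred M) :
  (forall i j, j \in eqclass i -> P i = P j) ->
  count P (enum M) = (\sum_(j <- enumJ | P j) #|eqclass j|)%N.
Proof.
move=> P_inv.
rewrite /enumJ big_filter_cond -sum1_count !big_enum_cond.
under [RHS]eq_bigr do rewrite -sum1_card.
rewrite (exchange_big_dep xpredT) //= [LHS]big_mkcond /=.
apply: eq_bigr => i _; rewrite sum1dep_card.
(* the only index of J in the class of i is its sorted representative *)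
have -> : [set j | in_J j && P j & i \in eqclass j]
          = if P i then [set sorted_rep i] else finset.set0.
  apply/setP => j; rewrite inE; case: ifP => Pi; rewrite ?inE.
  - apply/idP/eqP => [/andP[/andP[j_J _] i_j]|->].
      by rewrite -in_eqclass in i_j; rewrite (sorted_rep_unique _ _ j_J i_j).
    rewrite sorted_rep_J -(P_inv _ _ (sorted_rep_in i)) Pi.
    by rewrite -in_eqclass eqclass_sym sorted_rep_in.
  - apply/negP => /andP[/andP[_ Pj] i_j]; rewrite -in_eqclass in i_j.
    by move: Pi; rewrite -(P_inv j i i_j) Pj.
by case: (P i); rewrite ?cards1 ?cards0.
Qed.

End MultiIndices.

Lemma count_lt_subpred {T : eqType} {a b : pred T} {s : seq T} (x : T) :
  subpred a b -> x \in s -> b x -> ~~ a x -> (count a s < count b s)%N.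
Proof.
move=> sub_ab + bx nax; elim: s => //= y s IH; rewrite inE => /predU1P[<-|x_s].
  by rewrite bx (negbTE nax) ltnS sub_count.
have ay_le_by : (a y <= b y)%N by case: (a y) (@sub_ab y) => // ->.
by have := IH x_s; lia.
Qed.

Section Estimates.
Variables (R : realType) (m n : nat) (q : R).
Hypotheses (m_gt0 : (0 < m)%N) (q_ge12 : 2^-1 <= q) (q_le1 : q <= 1).
Local Notation M := (Mind m n).
Local Notation W := (pweight q).
Local Notation J := (enumJ m n).
Local Notation ccard j := (#|eqclass j|%:R : R).

Let q_gt0 : 0 < q. Proof. by apply: lt_le_trans q_ge12; rewrite invr_gt0. Qed.
Let W_noninc k : W k.+1 <= W k. Proof. exact: pweight_noninc. Qed.
Let W_ge0 k : 0 <= W k. Proof. exact/pweight_ge0/ltW. Qed.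

Lemma lorentz_level_le (A : pred M) (s : nat) :
  lorentz W J (fun j => ccard j `^ q * (A j && (level j == s))%:R)
    <= 2 * (\sum_(j <- J | A j && (level j == s)) #|eqclass j|)%:R `^ q.
Proof.
set P := fun j => A j && (level j == s); set N := count P J.
have le_card : forall j, ccard j `^ q * (P j)%:R <= (2 ^ s.+1)%:R `^ q * (P j)%:R.
  move=> j; rewrite /P; case: (level j =P s) => [<-|_]; rewrite ?andbF ?mulr0 //.
  case: (A j); rewrite ?mulr0 // !mulr1 ge0_ler_powR ?nnegrE ?ler_nat ?(ltW q_gt0) //.
  exact/ltnW/card_eqclass_lt_level.
apply: le_trans (ler_lorentz W_noninc W_ge0 le_card) _.
rewrite lorentzZ ?powR_ge0 // lorentz_indicator sum_pweight ?gt_eqF //.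
rewrite -powRM ?ler0n // -natrM.
have le_count : (2 ^ s * N <= \sum_(j <- J | P j) #|eqclass j|)%N.
  rewrite /N -sum1_count big_distrr /= muln1; apply: leq_sum => j /andP[_ /eqP <-].
  exact: exp_level_le.
apply: le_trans (_ : (2 * \sum_(j <- J | P j) #|eqclass j|)%N%:R `^ q <= _).
  rewrite ge0_ler_powR ?nnegrE ?ler0n ?(ltW q_gt0) //.
  by rewrite ler_nat expnS -mulnA leq_mul2l le_count orbT.
by rewrite natrM powRM ?ler0n // ler_wpM2r ?powR_ge0 // ler1_powR ?ler1n.
Qed.

Lemma lorentz_indicator_le (A : pred M) :
  lorentz W J (fun j => ccard j `^ q * (A j)%:R)
    <= 2 * m%:R * (\sum_(j <- J | A j) #|eqclass j|)%:R `^ q.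
Proof.
pose Ms s := (\sum_(j <- J | A j && (level j == s)) #|eqclass j|)%N.
have split_level j : (A j)%:R = \sum_(s < m * m) (A j && (level j == s))%:R :> R.
  rewrite (bigD1 (Ordinal (level_lt j m_gt0))) //= eqxx andbT big1 ?addr0 // => s.
  by rewrite andbC -val_eqE /= eq_sym => /negbTE->.
have sum_Ms : (\sum_(j <- J | A j) #|eqclass j| = \sum_(s < m * m) Ms s)%N.
  rewrite /Ms (exchange_big_dep A) => [|s j _ /andP[] //].
  apply: eq_bigr => j Aj; rewrite (big_pred1 (Ordinal (level_lt j m_gt0))) // => s /=.
  by rewrite Aj eq_sym -val_eqE.
rewrite (eq_in_lorentz J _ (fun j => \sum_(s < m * m)
           ccard j `^ q * (A j && (level j == s))%:R)); last first.
  by move=> j _; rewrite split_level mulr_sumr.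
apply: le_trans; first exact: (lorentz_sum_le W_noninc).
apply: le_trans (_ : _ <= \sum_(s < m * m) 2 * (Ms s)%:R `^ q) _.
  by apply: ler_sum => s _; exact: lorentz_level_le.
rewrite -mulr_sumr -mulrA ler_wpM2l // sum_Ms natr_sum.
by apply: (sum_powR_le _ (fun s => (Ms s)%:R)) => // s.
Qed.

Lemma lorentz_class_weighted_le (g : M -> R) :
  (forall i, 0 <= g i) -> (forall i j, j \in eqclass i -> g i = g j) ->
  lorentz W J (fun j => ccard j `^ q * g j) <= 2 * m%:R * lorentz W (enum M) g.
Proof.
have [N] := ubnP (count (fun j => 0 < g j) J); elim: N g => // N IH g.
move=> cnt_g g_ge0 g_sym.
have [/hasP[j0 _ g_j0]|/hasPn g_J] := boolP (has (fun j => 0 < g j) J); last first.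
  rewrite (eq_in_lorentz J _ (fun _ => 0)) ?lorentz0.
    by rewrite mulr_ge0 ?mulr_ge0 ?lorentz_ge0.
  move=> j /g_J; rewrite lt_def g_ge0 andbT negbK => /eqP->; exact: mulr0.
(* peel off the layer of height t, the least positive value of g *)
case: (arg_minP g (P := fun i => 0 < g i) g_j0) => i1 g_i1 min_i1; set t := g i1.
pose g' i := Num.max (g i - t) 0.
have t_ge0 : 0 <= t := ltW g_i1.
have g'_ge0 i : 0 <= g' i by rewrite le_max lexx orbT.
have g'_sym i j : j \in eqclass i -> g' i = g' j by move=> /g_sym eq_g; rewrite /g' eq_g.
have cnt_g' : (count (fun j => (0 < g' j)%R) J < N)%N.
  suff : (count (fun j => (0 < g' j)%R) J < count (fun j => (0 < g j)%R) J)%N by lia.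
  apply: (count_lt_subpred (sorted_rep i1)).
  - by move=> j; rewrite /g' lt_max ltxx orbF subr_gt0; apply: le_lt_trans.
  - exact: sorted_rep_enumJ.
  - by rewrite -(g_sym _ _ (sorted_rep_in i1)).
  - by rewrite /g' -(g_sym _ _ (sorted_rep_in i1)) subrr maxxx ltxx.
have C_eq : count (fun i => 0 < g i) (enum M) = (\sum_(j <- J | (0 < g j)%R) #|eqclass j|)%N.
  by apply: count_class_invariant => i j /g_sym->.
rewrite (lorentz_layer (enum M) g t t_ge0 g_ge0 min_i1) sum_pweight ?gt_eqF // C_eq.
rewrite (eq_in_lorentz J _ (fun j => ccard j `^ q * g' j
                                     + t * (ccard j `^ q * (0 < g j)%R%:R))); last first.
  move=> j _; rewrite mulrCA -mulrDr -(min_layer t_ge0 (g_ge0 j) (min_i1 j)).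
  by rewrite max_sub_add_min.
apply: le_trans (lorentzD_le W_noninc) _.
rewrite lorentzZ // mulrDr mulrCA lerD ?IH // ler_wpM2l //.
exact: lorentz_indicator_le.
Qed.

End Estimates.

Theorem lemma5p4 (R : realType) :
  exists L : R, 0 < L /\
    forall (m n : nat), (0 < m)%N ->
    forall a : Mind m n -> R[i], symmetric_mat a ->
      normDJ ((2 * m)%:R / (m.+1)%:R) a
        <= L * m%:R * normM ((2 * m)%:R / (m.+1)%:R) a.
Proof.
exists 2; split => // m n m_gt0 a a_sym.
have m_pos : 0 < m%:R :> R by rewrite ltr0n.
have m1E : m.+1%:R = m%:R + 1 :> R by rewrite -addn1 natrD.
have q_ge12 : 2^-1 <= m.+1%:R / (2 * m)%:R :> R.
  by rewrite natrM ler_pdivlMr ?mulr_gt0 // m1E mulrA mulVf ?mul1r ?pnatr_eq0 //; lra.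
have q_le1 : m.+1%:R / (2 * m)%:R <= 1 :> R.
  rewrite natrM ler_pdivrMr ?mulr_gt0 // m1E mul1r.
  have : 1 <= m%:R :> R by rewrite ler1n.
  lra.
rewrite /normDJ /normM !lorentz_p1_map invf_div.
apply: lorentz_class_weighted_le => // [i|i j /a_sym->//].
by rewrite /cmod normc_def /= sqrtr_ge0.
Qed.
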